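(* Let $\kappa$ be an infinite cardinal and suppose $HC(\kappa)$ holds, i.e. every end of degree $\kappa$ of every graph has a ray graph. Then every end of degree $\kappa$ of every graph has property $HC^*(\kappa)$. In particular, if an end $\varepsilon$ of degree $\kappa$ contains a $\kappa$-star of rays, then $\varepsilon$ has property $HC^*(\kappa)$.
   Context: Rays, ends, degree of an end as usual (the degree of $\varepsilon$ is the supremum of sizes of families of disjoint rays in $\varepsilon$). A family of paths is independent if the paths meet only in endpoints. For a family $\mathcal R$ of rays, an $\mathcal R$-family of paths is a family of paths whose endpoints lie on rays of $\mathcal R$; it is $\mathcal R$-internally disjoint if no path meets any ray of $\mathcal R$ except at its endpoints. For pairwise disjoint equivalent rays $\mathcal R$ and an independent $\mathcal R$-internally disjoint $\mathcal R$-family $\mathcal P$, the ray graph of $(\mathcal R,\mathcal P)$ has vertex set $\mathcal R$, with $r,s$ adjacent iff infinitely many paths of $\mathcal P$ join $r$ and $s$. A ray graph for an end $\varepsilon$ is a connected such ray graph with $\mathcal R\subseteq\varepsilon$ and $|\mathcal R|=\deg(\varepsilon)$. An end $\varepsilon$ of degree $\kappa$ has property $HC^*(\kappa)$ if there is a family $\mathcal R\subseteq\varepsilon$ of $\kappa$ pairwise disjoint rays and an $\mathcal R$-internally disjoint $\mathcal R$-family of paths $\mathcal P$ such that for every countable $\mathcal R'\subseteq\mathcal R$ there are a countable $\mathcal R''$ with $\mathcal R'\subseteq\mathcal R''\subseteq\mathcal R$ and a countable family $\mathcal P''\subseteq\mathcal P$ of independent $\mathcal R''$-paths such that the ray graph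 of $(\mathcal R'',\mathcal P'')$ is connected. A $\kappa$-star of rays consists of a central ray and $\kappa$ further rays, all pairwise disjoint, each sending an infinite family of disjoint paths to the central ray, with paths from distinct families meeting only on the central ray. *)

From Stdlib Require Import List Relations.
Import ListNotations.
Set Implicit Arguments.

Section Graphs.
Variable V : Type.
Variable adj : V -> V -> Prop.

Definition simple_graph : Prop :=
  (forall x y, adj x y -> adj y x) /\ (forall x, ~ adj x x).

Fixpoint chain (p : list V) : Prop :=
  match p with
  | x :: ((y :: _) as t) => adj x y /\ chain t
  | _ => True
  end.

Definition is_path (p : list V) : Prop := p <> [] /\ NoDup p /\ chain p.

Definition first_vx (p : list V) (v : V) : Prop := hd_error p = Some v.
Definition last_vx (p : list V) (v : V) : Prop := hd_error (rev p) = Some v.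
Definition is_endpoint (p : list V) (v : V) : Prop := first_vx p v \/ last_vx p v.

Definition is_ray (r : nat -> V) : Prop :=
  (forall n m, r n = r m -> n = m) /\ (forall n, adj (r n) (r (S n))).

Definition on_ray (r : nat -> V) (v : V) : Prop := exists n, r n = v.

(** r and s are equivalent: for every finite vertex set S, tails of r and s
    lie in the same component of G - S *)
Definition equiv_rays (r s : nat -> V) : Prop :=
  forall S : list V, exists n m (p : list V),
    (forall k, n <= k -> ~ In (r k) S) /\
    (forall k, m <= k -> ~ In (s k) S) /\
    is_path p /\ first_vx p (r n) /\ last_vx p (s m) /\
    (forall v, In v p -> ~ In v S).

Definition is_end (eps : (nat -> V) -> Prop) : Prop :=
  (exists r, eps r) /\ (forall r, eps r -> is_ray r) /\
  (forall r s, eps r -> is_ray s -> (eps s <-> equiv_rays r s)).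

Definition disjoint_rays (R : (nat -> V) -> Prop) : Prop :=
  (forall r, R r -> is_ray r) /\
  (forall r s, R r -> R s -> r <> s -> forall n m, r n <> s m).

Definition equivalent_rays (R : (nat -> V) -> Prop) : Prop :=
  forall r s, R r -> R s -> equiv_rays r s.

Definition R_family (R : (nat -> V) -> Prop) (P : list V -> Prop) : Prop :=
  forall p, P p -> is_path p /\
    (exists r v, R r /\ on_ray r v /\ first_vx p v) /\
    (exists r v, R r /\ on_ray r v /\ last_vx p v).

Definition R_internally_disjoint (R : (nat -> V) -> Prop) (P : list V -> Prop) : Prop :=
  forall p r v, P p -> R r -> In v p -> on_ray r v -> is_endpoint p v.

Definition independent (P : list V -> Prop) : Prop :=
  forall p q v, P p -> P q -> p <> q -> In v p -> In v q ->
    is_endpoint p v /\ is_endpoint q v.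

Definition joins (p : list V) (r s : nat -> V) : Prop :=
  (exists a b, on_ray r a /\ on_ray s b /\ first_vx p a /\ last_vx p b) \/
  (exists a b, on_ray s a /\ on_ray r b /\ first_vx p a /\ last_vx p b).

Definition infinite_paths (Q : list V -> Prop) : Prop :=
  forall l : list (list V), exists p, Q p /\ ~ In p l.

Definition ray_graph_adj (R : (nat -> V) -> Prop) (P : list V -> Prop)
  (r s : nat -> V) : Prop :=
  R r /\ R s /\ r <> s /\ infinite_paths (fun p => P p /\ joins p r s).

Definition ray_graph_data (R : (nat -> V) -> Prop) (P : list V -> Prop) : Prop :=
  disjoint_rays R /\ equivalent_rays R /\ R_family R P /\
  R_internally_disjoint R P /\ independent P.

Definition ray_graph_connected (R : (nat -> V) -> Prop) (P : list V -> Prop) : Prop :=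
  forall r s, R r -> R s -> clos_refl_trans _ (ray_graph_adj R P) r s.

End Graphs.

Definition card_le (A B : Type) : Prop := exists f : A -> B, forall x y, f x = f y -> x = y.
Definition card_lt (A B : Type) : Prop := card_le A B /\ ~ card_le B A.
Definition card_eq (A B : Type) : Prop :=
  exists f : A -> B, (forall x y, f x = f y -> x = y) /\ (forall y, exists x, f x = y).
Definition infinite_card (K : Type) : Prop := card_le nat K.
Definition countable (A : Type) : Prop := card_le A nat.

(** deg(eps) = |K| : |K| is the supremum of the sizes of families of
    disjoint rays in eps *)
Definition end_degree (V : Type) (adj : V -> V -> Prop)
  (eps : (nat -> V) -> Prop) (K : Type) : Prop :=
  (forall R : (nat -> V) -> Prop, (forall r, R r -> eps r) -> disjoint_rays adj R ->
     card_le {r | R r} K) /\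
  (forall L : Type, card_lt L K ->
     exists R : (nat -> V) -> Prop, (forall r, R r -> eps r) /\ disjoint_rays adj R /\
       ~ card_le {r | R r} L).

Definition has_ray_graph (V : Type) (adj : V -> V -> Prop)
  (eps : (nat -> V) -> Prop) (K : Type) : Prop :=
  exists (R : (nat -> V) -> Prop) (P : list V -> Prop),
    (forall r, R r -> eps r) /\ card_eq {r | R r} K /\
    ray_graph_data adj R P /\ ray_graph_connected R P.

Definition HC (K : Type) : Prop :=
  forall (V : Type) (adj : V -> V -> Prop), simple_graph adj ->
    forall eps, is_end adj eps -> end_degree adj eps K -> has_ray_graph adj eps K.

Definition HCstar (V : Type) (adj : V -> V -> Prop)
  (eps : (nat -> V) -> Prop) (K : Type) : Prop :=
  exists (R : (nat -> V) -> Prop) (P : list V -> Prop),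
    (forall r, R r -> eps r) /\ disjoint_rays adj R /\ card_eq {r | R r} K /\
    R_family adj R P /\ R_internally_disjoint R P /\
    forall R' : (nat -> V) -> Prop, (forall r, R' r -> R r) -> countable {r | R' r} ->
      exists R'' : (nat -> V) -> Prop,
        (forall r, R' r -> R'' r) /\ (forall r, R'' r -> R r) /\ countable {r | R'' r} /\
        exists P'' : list V -> Prop,
          (forall p, P'' p -> P p) /\ countable {p | P'' p} /\
          independent P'' /\ R_family adj R'' P'' /\
          ray_graph_connected R'' P''.

Definition ray_ray_path (V : Type) (adj : V -> V -> Prop) (p : list V) (r c : nat -> V) : Prop :=
  is_path adj p /\
  (exists a, on_ray r a /\ first_vx p a) /\ (exists b, on_ray c b /\ last_vx p b) /\
  (forall v, In v p -> on_ray r v -> first_vx p v) /\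
  (forall v, In v p -> on_ray c v -> last_vx p v).

Definition contains_star (V : Type) (adj : V -> V -> Prop)
  (eps : (nat -> V) -> Prop) (K : Type) : Prop :=
  exists (c : nat -> V) (R : (nat -> V) -> Prop) (Q : (nat -> V) -> list V -> Prop),
    eps c /\ (forall r, R r -> eps r) /\ ~ R c /\ card_eq {r | R r} K /\
    disjoint_rays adj (fun r => r = c \/ R r) /\
    (forall r, R r ->
       infinite_paths (Q r) /\
       (forall p, Q r p -> ray_ray_path adj p r c) /\
       (forall p q v, Q r p -> Q r q -> p <> q -> In v p -> ~ In v q)) /\
    (forall r s p q v, R r -> R s -> r <> s -> Q r p -> Q s q ->
       In v p -> In v q -> on_ray c v).

(* A connected ray graph yields HC*: a countable set of rays is joined to a fixed ray
   by countably many finite walks of the ray graph, and the rays on these walks span a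
   countable connected subgraph.  Each of its edges is witnessed by infinitely many paths,
   of which a countable sequence suffices. *)
From Stdlib Require Import List Relations Classical ClassicalEpsilon ProofIrrelevance Cantor Lia FinFun.
Import ListNotations.
Set Implicit Arguments.

Lemma to_nat_inj (a b : nat * nat) : to_nat a = to_nat b -> a = b.
Proof. intro H. rewrite <- (cancel_of_to a), <- (cancel_of_to b), H. reflexivity. Qed.

Lemma countable_prod (A B : Type) : countable A -> countable B -> countable (A * B).
Proof.
  intros [f Hf] [g Hg]. exists (fun ab => to_nat (f (fst ab), g (snd ab))).
  intros [a b] [a' b'] E. apply to_nat_inj in E. injection E as Ea Eb.
  now rewrite (Hf _ _ Ea), (Hg _ _ Eb).
Qed.

Lemma countable_nat : countable nat.
Proof. now exists (fun n => n). Qed.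

Lemma countable_sig_image (A X : Type) (f : A -> X) (T : X -> Prop) :
  countable A -> (forall x, T x -> exists a, f a = x) -> countable {x | T x}.
Proof.
  intros [c Hc] Hcover.
  assert (Hsec : forall s : {x | T x}, exists a, f a = proj1_sig s)
    by (intros [x Hx]; exact (Hcover x Hx)).
  destruct (choice _ Hsec) as [sec Hsec'].
  exists (fun s => c (sec s)). intros [x Hx] [y Hy] E.
  apply Hc in E. pose proof (Hsec' (exist _ x Hx)) as Ex. pose proof (Hsec' (exist _ y Hy)) as Ey.
  cbn in Ex, Ey. apply subset_eq_compat. now rewrite <- Ex, <- Ey, E.
Qed.

Lemma injective_enum_of_infinite (A : Type) (Q : A -> Prop) :
  (forall l : list A, exists a, Q a /\ ~ In a l) ->
  exists g : nat -> A, (forall n m, g n = g m -> n = m) /\ forall n, Q (g n).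
Proof.
  intro H. destruct (choice _ H) as [h Hh].
  set (L := fix L n := match n with 0 => [] | S n => h (L n) :: L n end).
  exists (fun n => h (L n)). split; [|intro n; apply Hh].
  assert (Hin : forall m n, m < n -> In (h (L m)) (L n)).
  { intros m n; induction n; intro Hmn; [lia|].
    destruct (PeanoNat.Nat.eq_dec m n) as [->|Hne]; [now left|].
    right; apply IHn; lia. }
  intros n m E. destruct (PeanoNat.Nat.lt_trichotomy n m) as [Hl|[Hl|Hl]]; auto; exfalso.
  - apply (proj2 (Hh (L m))). rewrite <- E. now apply Hin.
  - apply (proj2 (Hh (L n))). rewrite E. now apply Hin.
Qed.

Lemma infinite_of_injective_enum (A : Type) (g : nat -> A) :
  (forall n m, g n = g m -> n = m) -> forall l : list A, exists n, ~ In (g n) l.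
Proof.
  intros Hg l. apply NNPP; intro Hc.
  assert (Hall : forall n, In (g n) l).
  { intro n. apply NNPP; intro Hn. apply Hc. now exists n. }
  assert (Hnd : NoDup (map g (seq 0 (S (length l))))).
  { apply Injective_map_NoDup; [intros x y; apply Hg | apply seq_NoDup]. }
  assert (Hinc : incl (map g (seq 0 (S (length l)))) l).
  { intros a Ha. apply in_map_iff in Ha. destruct Ha as [x [<- _]]. apply Hall. }
  pose proof (NoDup_incl_length Hnd Hinc) as Hle.
  rewrite length_map, length_seq in Hle. lia.
Qed.

Lemma clos_rt_sym (A : Type) (E : A -> A -> Prop) :
  (forall x y, E x y -> E y x) -> forall x y, clos_refl_trans _ E x y -> clos_refl_trans _ E y x.
Proof.
  intros Hs x y H; induction H; [apply rt_step; auto | apply rt_refl | eapply rt_trans; eauto].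
Qed.

Lemma clos_rt_mono (A : Type) (E F : A -> A -> Prop) :
  (forall x y, E x y -> F x y) -> forall x y, clos_refl_trans _ E x y -> clos_refl_trans _ F x y.
Proof.
  intros HEF x y H; induction H; [apply rt_step; auto | apply rt_refl | eapply rt_trans; eauto].
Qed.

Section Walks.
Variable A : Type.
Variable E : A -> A -> Prop.

Definition restrict (S : A -> Prop) (x y : A) : Prop := S x /\ S y /\ E x y.

Fixpoint walk (a : A) (l : list A) (b : A) : Prop :=
  match l with
  | [] => a = b
  | y :: t => E a y /\ walk y t b
  end.

Lemma walk_of_clos_rt a b : clos_refl_trans _ E a b -> exists l, walk a l b.
Proof.
  intro H. apply clos_rt_rt1n in H. induction H as [|x y z Hxy _ [l Hl]].
  - now exists [].
  - exists (y :: l); now split.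
Qed.

Lemma walk_last a l b : walk a l b -> a = b \/ In b l.
Proof.
  revert a; induction l as [|y t IH]; cbn; intros a H; auto.
  destruct H as [_ H]. destruct (IH _ H) as [->|Hi]; auto.
Qed.

Lemma walk_vertices (S : A -> Prop) :
  (forall x y, E x y -> S y) -> forall l a b x, walk a l b -> In x l -> S x.
Proof.
  intros HS l; induction l as [|y t IH]; cbn; intros a b x Hw Hx; [contradiction|].
  destruct Hw as [Hay Hw]. destruct Hx as [<-|Hx]; eauto.
Qed.

Lemma walk_reach_within (S : A -> Prop) l a b :
  walk a l b -> S a -> (forall x, In x l -> S x) ->
  forall x, In x l -> clos_refl_trans _ (restrict S) a x.
Proof.
  revert a; induction l as [|y t IH]; cbn; intros a Hw Ha Hl x Hx; [contradiction|].
  destruct Hw as [Hay Hw].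
  assert (Hstep : clos_refl_trans _ (restrict S) a y) by (apply rt_step; repeat split; auto).
  destruct Hx as [<-|Hx]; auto.
  eapply rt_trans; [exact Hstep|]. eapply IH; eauto.
Qed.

Lemma countable_connected_superset (S T : A -> Prop) :
  (forall x y, E x y -> E y x) -> (forall x y, E x y -> S y) ->
  (forall x y, S x -> S y -> clos_refl_trans _ E x y) ->
  (forall x, T x -> S x) -> countable {x | T x} ->
  exists T' : A -> Prop,
    (forall x, T x -> T' x) /\ (forall x, T' x -> S x) /\ countable {x | T' x} /\
    forall x y, T' x -> T' y -> clos_refl_trans _ (restrict T') x y.
Proof.
  intros Hsym HES Hconn HTS HTc.
  destruct (classic (exists x0, T x0)) as [[x0 Hx0]|Hempty].
  2:{ exists T. repeat split; auto. intros x y Hx; exfalso; eauto. }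
  assert (Hwalks : forall t, exists l, T t -> walk x0 l t).
  { intro t. destruct (classic (T t)) as [Ht|Ht].
    - destruct (walk_of_clos_rt (Hconn _ _ (HTS _ Hx0) (HTS _ Ht))) as [l Hl]. now exists l.
    - now exists []. }
  destruct (choice _ Hwalks) as [W HW].
  set (T' := fun x => exists t, T t /\ In x (x0 :: W t)).
  assert (HT'S : forall x, T' x -> S x).
  { intros x [t [Ht [<-|Hx]]]; [auto | eapply walk_vertices; eauto]. }
  assert (Hfrom : forall x, T' x -> clos_refl_trans _ (restrict T') x0 x).
  { intros x [t [Ht [<-|Hx]]]; [apply rt_refl|].
    eapply walk_reach_within; eauto.
    - exists t; split; auto; now left.
    - intros z Hz; exists t; split; auto; now right. }
  exists T'. repeat split; auto.
  - intros t Ht. exists t; split; auto.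
    destruct (@walk_last x0 (W t) t (HW t Ht)) as [->|Hi]; [now left | now right].
  - apply (countable_sig_image
             (fun tn : {t | T t} * nat => nth (snd tn) (x0 :: W (proj1_sig (fst tn))) x0)).
    + apply countable_prod; [exact HTc | exact countable_nat].
    + intros x [t [Ht Hx]]. destruct (In_nth _ _ x0 Hx) as [n [_ Hn]].
      now exists (exist _ t Ht, n).
  - intros x y Hx Hy.
    eapply rt_trans; [apply clos_rt_sym; [|apply Hfrom; auto] | apply Hfrom; auto].
    intros u v [Hu [Hv Huv]]; repeat split; auto.
Qed.

End Walks.

Section RayGraph.
Variable V : Type.
Variable adj : V -> V -> Prop.

Lemma ray_graph_adj_sym (R : (nat -> V) -> Prop) P x y :
  ray_graph_adj R P x y -> ray_graph_adj R P y x.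
Proof.
  intros [Hx [Hy [Hne Hinf]]]. repeat split; auto.
  intro l. destruct (Hinf l) as [p [[HP Hj] Hn]]. exists p; repeat split; auto.
  unfold joins in *; tauto.
Qed.

Lemma ray_graph_edge_enum (R : (nat -> V) -> Prop) (P : list V -> Prop) :
  exists G : (nat -> V) -> (nat -> V) -> nat -> list V,
    forall x y, ray_graph_adj R P x y ->
      (forall n m, G x y n = G x y m -> n = m) /\ forall n, P (G x y n) /\ joins (G x y n) x y.
Proof.
  assert (Hxy : forall x y, exists g : nat -> list V, ray_graph_adj R P x y ->
     (forall n m, g n = g m -> n = m) /\ forall n, P (g n) /\ joins (g n) x y).
  { intros x y. destruct (classic (ray_graph_adj R P x y)) as [Ha|Ha].
    - destruct (@injective_enum_of_infinite _ _ (proj2 (proj2 (proj2 Ha)))) as [g Hg].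
      now exists g.
    - exists (fun _ => []); contradiction. }
  destruct (choice _ (fun x => choice _ (Hxy x))) as [G HG]. now exists G.
Qed.

Lemma HCstar_of_ray_graph (eps : (nat -> V) -> Prop) (K : Type) :
  has_ray_graph adj eps K -> HCstar adj eps K.
Proof.
  intros [R [P [Heps [Hcard [[Hdis [_ [Hfam [Hint Hind]]]] Hconn]]]]].
  exists R, P. do 5 (split; auto). intros R' HR' HR'c.
  destruct (@countable_connected_superset _ (ray_graph_adj R P) R R'
              (@ray_graph_adj_sym R P) (fun x y H => proj1 (proj2 H)) Hconn HR' HR'c)
    as [R'' [HR'R'' [HR''R [HR''c HR''conn]]]].
  destruct (ray_graph_edge_enum R P) as [G HG].
  set (P'' := fun p => exists x y n,
                R'' x /\ R'' y /\ ray_graph_adj R P x y /\ p = G x y n).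
  assert (HP''P : forall p, P'' p -> P p).
  { intros p [x [y [n [_ [_ [Ha ->]]]]]]. apply (HG x y Ha). }
  assert (Hlift : forall x y, restrict (ray_graph_adj R P) R'' x y -> ray_graph_adj R'' P'' x y).
  { intros x y [Hx [Hy Ha]]. pose proof Ha as [_ [_ [Hne _]]]. repeat split; auto.
    destruct (HG x y Ha) as [Hinj Hn]. intro l.
    destruct (@infinite_of_injective_enum _ _ Hinj l) as [n Hnl].
    exists (G x y n). repeat split; auto; [exists x, y, n; auto | apply Hn]. }
  exists R''. do 3 (split; auto). exists P''. split; auto. split.
  { apply (countable_sig_image (fun t : {x | R'' x} * {y | R'' y} * nat =>
             G (proj1_sig (fst (fst t))) (proj1_sig (snd (fst t))) (snd t))).
    - repeat apply countable_prod; auto using countable_nat.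
    - intros p [x [y [n [Hx [Hy [_ ->]]]]]]. now exists (exist _ x Hx, exist _ y Hy, n). }
  split; [intros p q v Hp Hq; apply Hind; auto|]. split.
  - intros p [x [y [n [Hx [Hy [Ha ->]]]]]].
    destruct (proj2 (HG x y Ha) n) as [HPn Hj].
    split; [apply (Hfam _ HPn)|].
    destruct Hj as [[a [b [Ha' [Hb [Hf Hl]]]]]|[a [b [Ha' [Hb [Hf Hl]]]]]].
    + split; [exists x, a | exists y, b]; auto.
    + split; [exists y, a | exists x, b]; auto.
  - intros x y Hx Hy. eapply clos_rt_mono; [exact Hlift | apply HR''conn; auto].
Qed.

End RayGraph.

Theorem mainTheorem6 (K : Type) :
  infinite_card K -> HC K ->
  (forall (V : Type) (adj : V -> V -> Prop), simple_graph adj ->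
     forall eps, is_end adj eps -> end_degree adj eps K -> HCstar adj eps K) /\
  (forall (V : Type) (adj : V -> V -> Prop), simple_graph adj ->
     forall eps, is_end adj eps -> end_degree adj eps K -> contains_star adj eps K ->
       HCstar adj eps K).
Proof.
  intros _ HHC.
  assert (Hall : forall (V : Type) (adj : V -> V -> Prop), simple_graph adj ->
     forall eps, is_end adj eps -> end_degree adj eps K -> HCstar adj eps K).
  { intros V adj Hs eps He Hd. apply HCstar_of_ray_graph, HHC; auto. }
  split; [exact Hall | intros V adj Hs eps He Hd _; apply Hall; auto].
Qed.
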